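(* Let $G$ be a connected threshold graph that is not complete. Then $\chi(\mathcal{R}(G))=3$.
   Context: A threshold graph is a graph that can be constructed from a single vertex by repeatedly adding either an isolated vertex or a universal vertex (a vertex adjacent to all existing vertices). For a connected graph $G$, a search tree on $G$ is a rooted tree with vertex set $V(G)$ defined recursively: its root is some vertex $r\in V(G)$, and the children of $r$ are the roots of search trees on the connected components of $G-r$. For a rooted tree $T$ and $w\in V(T)$, $T|w$ denotes the subtree rooted at $w$. Let $T$ be a search tree on $G$, let $v$ be a child of $u$ in $T$, and let $p$ be the parent of $u$ (if it exists). The $uv$-rotation transforms $T$ into the search tree $T'$ in which: $u$ is a child of $v$ and $v$ is a child of $p$ (or $v$ is the root if $u$ was the root); every subtree of $u$ in $T$ other than $T|v$ is a subtree of $u$ in $T'$; and every subtree $S$ of $v$ in $T$ is a subtree of $u$ in $T'$ if $u$ is adjacent in $G$ to some vertex of $S$, and a subtree of $v$ in $T'$ otherwise. The rotation graph $\mathcal{R}(G)$ is the graph whose vertices are the search trees on $G$, two being adjacent iff they differ by one rotation. $\chi$ denotes chromatic number. *)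

From mathcomp Require Import all_boot.
Set Implicit Arguments. Unset Strict Implicit. Unset Printing Implicit Defensive.

Section Graphs.
Variables (T : finType) (e : rel T).

(** A graph on T is given by a symmetric irreflexive relation e. *)
Definition graph_connected : Prop := forall x y : T, connect e x y.

Definition complete_graph : Prop := forall x y : T, x != y -> e x y.

(** Threshold graph: the vertices can be listed (each exactly once) so that
    every vertex is either isolated from or universal to all vertices listed
    before it -- i.e. G is built from a single vertex by repeatedly adding an
    isolated or a universal vertex. *)
Definition threshold_graph : Prop :=
  exists s : seq T, [/\ uniq s, (forall x, x \in s) &
    forall s1 x s2, s = s1 ++ x :: s2 ->
      (forall y, y \in s1 -> e x y) \/ (forall y, y \in s1 -> ~~ e x y)].

Definition induced (C : {set T}) : rel T :=
  [rel x y | [&& x \in C, y \in C & e x y]].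

Definition is_component (S C : {set T}) : Prop :=
  [/\ C != set0, C \subset S,
      (forall x y, x \in C -> y \in C -> connect (induced C) x y) &
      (forall x y, x \in C -> y \in S -> e x y -> y \in C)].

(** Rooted trees on V(G) are encoded by their parent map p
    (p x = None iff x is the root).
    [st p S r]: the restriction of p to S is a search tree on G[S] rooted
    at r: the children of r are the roots of search trees on the connected
    components of G[S] - r. *)
Inductive st (p : T -> option T) : {set T} -> T -> Prop :=
| StNode (S : {set T}) (r : T) :
    r \in S ->
    (forall C, is_component (S :\ r) C ->
       exists c, [/\ c \in C, p c = Some r & st p C c]) ->
    st p S r.

Definition is_search_tree (p : {ffun T -> option T}) : Prop :=
  exists r, p r = None /\ st p [set: T] r.

(** [desc p w y]: y is a vertex of the subtree T|w (w is an ancestor of y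
    or y = w). *)
Definition desc (p : {ffun T -> option T}) (w y : T) : bool :=
  connect [rel a b | p a == Some b] y w.

Definition rotate (p : {ffun T -> option T}) (u v : T) : {ffun T -> option T} :=
  [ffun x => if x == v then p u
             else if x == u then Some v
             else if p x == Some v then
                    (if [exists y, desc p x y && e u y] then Some u else Some v)
             else p x].

Definition is_rotation (p q : {ffun T -> option T}) : Prop :=
  exists u v, p v = Some u /\ q = rotate p u v.

Definition rot_adj (p q : {ffun T -> option T}) : Prop :=
  p != q /\ (is_rotation p q \/ is_rotation q p).

End Graphs.

Definition colorable (V : Type) (vert : V -> Prop) (adj : V -> V -> Prop)
    (k : nat) : Prop :=
  exists f : V -> 'I_k, forall x y, vert x -> vert y -> adj x y -> f x != f y.

Definition chromatic_number_is (V : Type) (vert : V -> Prop)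
    (adj : V -> V -> Prop) (k : nat) : Prop :=
  colorable vert adj k /\ (forall j, colorable vert adj j -> k <= j).

Definition rotation_graph_chi_is (T : finType) (e : rel T) (k : nat) : Prop :=
  chromatic_number_is (@is_search_tree T e) (@rot_adj T e) k.

(* Rank the vertices by [key]: vertices added as dominating come above those
   added as isolated, later dominating ones higher, later isolated ones lower.
   Then [key x < key y] forces N(x) \ {y} to lie in N(y), so the key-largest
   vertex of a connected vertex set is adjacent to all of it.

   For a search tree p and a vertex w let N_p(w) be the number of vertices of
   the subtree T|w above w.  A uv-rotation q of p only changes the subtrees
   of u and v, T_p|u = T_q|v =: X, and T_p|v, T_q|u are the components of
   X - u, X - v containing v, u.  If, say, v is below u, comparing with the
   key-largest vertex of X shows N_q(u) = N_p(u), while N_q(v) is N_p(v) + 1,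
   or positive with N_p(v) = 0.  Colouring a count k by 0 if k = 0, 1 if k is
   odd and 2 otherwise, exactly one colour changes under a rotation, so the
   sum of the colours mod 3 is a proper 3-colouring of R(G).

   Conversely, let a, c be non-adjacent and b be universal.  Putting the other
   vertices on a path from the root and below it either
   b with children a and c, or one of the paths abc, acb, cab, cba, gives
   five search trees forming a 5-cycle of rotations, so two colours do not
   suffice. *)

From mathcomp Require Import all_boot zify.
Set Implicit Arguments. Unset Strict Implicit. Unset Printing Implicit Defensive.

Section InducedConnectivity.
Variables (T : finType) (e : rel T).
Hypothesis esym : symmetric e.
Implicit Types (S C : {set T}) (x y z t w : T).

Lemma induced_sym S : connect_sym (induced e S).
Proof. by apply: sym_connect_sym => a b; rewrite /induced /= esym andbCA. Qed.

Definition connected_in (S : {set T}) : Prop :=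
  forall x y, x \in S -> y \in S -> connect (induced e S) x y.

Lemma connected_in_setT : graph_connected e -> connected_in [set: T].
Proof.
move=> gc x y _ _; apply: connect_sub (gc x y) => a b ab.
by apply: connect1; rewrite /induced /= !in_setT.
Qed.

Lemma connected_in_neighbour S x y : connected_in S -> x \in S -> y \in S ->
  x != y -> exists2 t, t \in S & e x t.
Proof.
move=> cS xS yS /negPf xy; case/connectP: (cS x y xS yS) => [[|t ps]] /=.
  by move=> _ /eqP; rewrite eq_sym xy.
by case/andP=> /and3P [_ tS xt] _ _; exists t.
Qed.

Lemma connected_in_dominating S w : w \in S ->
  (forall y, y \in S -> y != w -> e w y) -> connected_in S.
Proof.
move=> wS wdom.
have wy y : y \in S -> connect (induced e S) w y.
  move=> yS; have [->|yw] := eqVneq y w; first exact: connect0.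
  by apply: connect1; rewrite /induced /= wS yS wdom.
by move=> x y xS yS; apply: connect_trans (wy y yS); rewrite induced_sym wy.
Qed.

Lemma connect_induced_sub (A B : {set T}) x y : A \subset B ->
  connect (induced e A) x y -> connect (induced e B) x y.
Proof.
move=> /subsetP AB; apply: connect_sub => a b /and3P [aA bA ab].
by apply: connect1; rewrite /induced /= !AB.
Qed.

Lemma connect_induced_closed (S C : {set T}) x y :
  (forall a b, a \in C -> b \in S -> e a b -> b \in C) -> x \in C ->
  connect (induced e S) x y -> y \in C /\ connect (induced e C) x y.
Proof.
move=> clC xC /connectP [ps]; elim: ps x xC => [|t ps IH] x xC /=.
  by move=> _ ->.
case/andP=> /and3P [_ tS xt] pth lst; have tC := clC x t xC tS xt.
have [yC tyC] := IH t tC pth lst; split=> //.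
by apply: connect_trans tyC; apply: connect1; rewrite /induced /= xC tC.
Qed.

Lemma component_connect S C x y : is_component e S C -> x \in C ->
  connect (induced e S) x y -> y \in C.
Proof. by case=> _ _ _ clC xC /(connect_induced_closed clC xC) []. Qed.

Lemma eq_component S C1 C2 t : is_component e S C1 -> is_component e S C2 ->
  t \in C1 -> t \in C2 -> C1 = C2.
Proof.
suff sub D1 D2 : is_component e S D1 -> is_component e S D2 ->
    t \in D1 -> t \in D2 -> D1 \subset D2.
  by move=> *; apply/eqP; rewrite eqEsubset !sub.
move=> compD1 compD2 tD1 tD2; have [_ sD1S cD1 _] := compD1.
apply/subsetP=> x xD1; apply: component_connect compD2 tD2 _.
exact: connect_induced_sub sD1S (cD1 t x tD1 xD1).
Qed.

Lemma component_full S C : connected_in S -> is_component e S C -> C = S.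
Proof.
move=> cS compC; have [/set0Pn [x xC] /subsetP CS _ _] := compC.
apply/setP=> y; apply/idP/idP=> [/CS //|yS].
exact: component_connect compC xC (cS x y (CS x xC) yS).
Qed.

Definition component_of (S : {set T}) (y : T) : {set T} :=
  [set z | connect (induced e S) y z].

Lemma mem_component_of S y : y \in component_of S y.
Proof. by rewrite inE connect0. Qed.

Lemma component_ofP S y : y \in S -> is_component e S (component_of S y).
Proof.
move=> yS; have inS z : z \in component_of S y -> z \in S.
  by rewrite inE => /(connect_induced_closed (fun _ _ _ bS _ => bS) yS) [].
have clY a b : a \in component_of S y -> b \in S -> e a b ->
    b \in component_of S y.
  move=> aY bS ab; have aS := inS a aY; rewrite inE in aY; rewrite inE.
  by apply: connect_trans aY (connect1 _); rewrite /induced /= aS bS.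
split=> [||x z xY zY|//]; first by apply/set0Pn; exists y; apply: mem_component_of.
  by apply/subsetP.
have xz : connect (induced e S) x z.
  by rewrite !inE in xY zY; apply: connect_trans zY; rewrite induced_sym.
by have [] := connect_induced_closed clY xY xz.
Qed.

End InducedConnectivity.

Definition subtree (T : finType) (p : {ffun T -> option T}) (w : T) : {set T} :=
  [set y | desc p w y].

Section SearchTrees.
Variables (T : finType) (e : rel T).
Hypothesis esym : symmetric e.
Implicit Types (S C : {set T}) (x y z t w : T) (p : {ffun T -> option T}).

Lemma desc_refl p w : desc p w w.
Proof. exact: connect0. Qed.

Lemma desc_child p w a b : p a = Some b -> desc p w b -> desc p w a.
Proof. by move=> pab; apply: connect_trans (connect1 _); rewrite /= pab. Qed.

Lemma desc_trans p a b c : desc p a b -> desc p b c -> desc p a c.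
Proof. by move=> ab bc; apply: connect_trans bc ab. Qed.

Lemma mem_subtree_self p w : w \in subtree p w.
Proof. by rewrite inE desc_refl. Qed.

Lemma subtree_child p w a b :
  p a = Some b -> b \in subtree p w -> a \in subtree p w.
Proof. by rewrite !inE; apply: desc_child. Qed.

Lemma subtree_parent p w y : y \in subtree p w -> y != w ->
  exists2 b, p y = Some b & b \in subtree p w.
Proof.
rewrite inE => /connectP [[|t ps]] /=; first by move=> _ ->; rewrite eqxx.
by case/andP=> /eqP pyt pth lst _; exists t; rewrite // inE; apply/connectP; exists ps.
Qed.

Lemma subtree_sub p S w : w \in S ->
  (forall a b, p a = Some b -> b \in S -> a \in S) -> subtree p w \subset S.
Proof.
move=> wS clS; apply/subsetP=> y; rewrite inE => /connectP [ps].
elim: ps y => [|t ps IH] y /=; first by move=> _ <-.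
by case/andP=> /eqP pyt pth lst; apply: clS pyt (IH t pth lst).
Qed.

Lemma sub_subtree p r S w : p r = None -> (forall y, desc p r y) ->
  w \in S -> (forall a, a \in S -> a != w -> exists2 b, p a = Some b & b \in S) ->
  S \subset subtree p w.
Proof.
move=> pr rall wS parS; apply/subsetP=> y yS; rewrite inE.
have /connectP [ps] := rall y; elim: ps y yS => [|t ps IH] y yS /=.
  move=> _ yr; have [->|yw] := eqVneq y w; first exact: connect0.
  by have [b] := parS y yS yw; rewrite -yr pr.
case/andP=> /eqP pyt pth lst; have [->|yw] := eqVneq y w; first exact: connect0.
have [b] := parS y yS yw; rewrite pyt => -[<-] tS.
exact: desc_child pyt (IH t tS pth lst).
Qed.

Lemma st_root_mem p S r : st e p S r -> r \in S.
Proof. by case. Qed.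

Lemma st_child p S r C : st e p S r -> is_component e (S :\ r) C ->
  exists c, [/\ c \in C, p c = Some r & st e p C c].
Proof. by case=> {}S {}r _; apply. Qed.

Lemma st_desc p S r y : st e p S r -> y \in S ->
  desc p r y /\ (y != r -> exists2 b, p y = Some b & b \in S).
Proof.
have [n] := ubnP #|S|; elim: n S r y => // n IH S r y ltSn stS yS.
have rS := st_root_mem stS.
have [->|yr] := eqVneq y r; first by split; rewrite ?eqxx ?desc_refl.
have yS' : y \in S :\ r by rewrite !inE yr.
have compY := component_ofP esym yS'; have [_ sYS _ _] := compY.
have /subsetP YS := sYS.
have [c [cY pc stc]] := st_child stS compY.
have ltYn : #|component_of e (S :\ r) y| < n.
  by have := subset_leq_card sYS; move: ltSn; rewrite (cardsD1 r S) rS; lia.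
have [dcy pary] := IH _ _ y ltYn stc (mem_component_of _ _ _).
split; first exact: desc_trans (desc_child pc (desc_refl p r)) dcy.
move=> _; have [->|yc] := eqVneq y c; first by exists r.
have [b pyb /YS] := pary yc; rewrite inE => /andP [_ bS]; by exists b.
Qed.

(* The invariant satisfied by S = T|r for every vertex r of a search tree p. *)
Definition search_subtree p S r : Prop :=
  [/\ st e p S r, (forall t, p r = Some t -> t \notin S),
      (forall a b, p a = Some b -> b \in S -> a \in S) & connected_in e S].

Lemma search_subtreeE p S r : search_subtree p S r -> subtree p r = S.
Proof.
case=> stS _ clS _; apply/eqP; rewrite eqEsubset subtree_sub //.
  by apply/subsetP=> y yS; rewrite inE; have [] := st_desc stS yS.
exact: st_root_mem stS.
Qed.

Lemma search_subtree_component_closed p S r C a b : search_subtree p S r ->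
  is_component e (S :\ r) C -> p a = Some b -> b \in C -> a \in C.
Proof.
case=> stS pr clS _ compC pab bC; have [_ /subsetP CS _ _] := compC.
have /setD1P [_ bS] := CS b bC; have aS := clS a b pab bS.
have ar : a != r by apply: contraTneq bS => ar; rewrite pr // -ar.
have aS' : a \in S :\ r by rewrite !inE ar.
have compA := component_ofP esym aS'; have [_ /subsetP AS _ _] := compA.
have [c [cA pc stc]] := st_child stS compA.
have [ac|ac] := eqVneq a c.
  by move: pab; rewrite ac pc => -[br]; move: (CS b bC); rewrite -br !inE eqxx.
have [b' pab' bA] := (st_desc stc (mem_component_of _ _ _)).2 ac.
move: pab'; rewrite pab => -[bb']; rewrite -bb' in bA.
by rewrite (eq_component compC compA bC bA) mem_component_of.
Qed.

Lemma search_subtree_child p S r c : search_subtree p S r -> p c = Some r ->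
  is_component e (S :\ r) (subtree p c) /\ search_subtree p (subtree p c) c.
Proof.
move=> sS pc; have [stS pr clS _] := sS; have rS := st_root_mem stS.
have cS' : c \in S :\ r.
  rewrite !inE (clS c r pc rS) andbT.
  by apply: contraTneq rS => cr; apply: pr; rewrite -{1}cr.
have compC := component_ofP esym cS'; have [_ /subsetP CS _ _] := compC.
have rC : r \notin component_of e (S :\ r) c.
  by apply: contraTN isT => /CS; rewrite !inE eqxx.
have [c' [c'C pc' stc']] := st_child stS compC.
have sC : search_subtree p (component_of e (S :\ r) c) c'.
  split=> // [t|a b|]; first by rewrite pc' => -[<-].
    exact: search_subtree_component_closed sS compC.
  by case: compC.
have cc' : c = c'.
  apply/eqP; apply: contraT => cc'.
  have [b] := (st_desc stc' (mem_component_of _ _ _)).2 cc'.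
  by rewrite pc => -[<-]; rewrite (negPf rC).
by rewrite -cc' in sC; rewrite (search_subtreeE sC).
Qed.

Lemma search_tree_subtree p : graph_connected e -> is_search_tree e p ->
  forall w, search_subtree p (subtree p w) w.
Proof.
move=> gc [r [pr stT]].
have sT : search_subtree p [set: T] r.
  by split=> // [t|a b _ _|]; rewrite ?pr ?in_setT //; apply: connected_in_setT.
have sub y : desc p r y -> search_subtree p (subtree p y) y.
  case/connectP=> ps; elim: ps y => [|t ps IH] y /=.
    by move=> _ <-; rewrite (search_subtreeE sT).
  by case/andP=> /eqP pyt pth lst; apply: (search_subtree_child (IH t pth lst) pyt).2.
by move=> w; apply: sub; apply: (st_desc stT (in_setT w)).1.
Qed.

End SearchTrees.

Section SearchTreeFacts.
Variables (T : finType) (e : rel T).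
Hypotheses (esym : symmetric e) (gc : graph_connected e).
Variable p : {ffun T -> option T}.
Hypothesis sp : is_search_tree e p.

Let sub_p w : search_subtree e p (subtree p w) w := search_tree_subtree esym gc sp w.

Lemma parent_notin_subtree x t : p x = Some t -> t \notin subtree p x.
Proof. by case: (sub_p x) => _ + _ _; apply. Qed.

Lemma parent_neq x t : p x = Some t -> x != t.
Proof.
by move=> pxt; apply: contraTneq (parent_notin_subtree pxt) => <-; rewrite mem_subtree_self.
Qed.

Lemma subtree_connected w : connected_in e (subtree p w).
Proof. by case: (sub_p w). Qed.

Lemma child_subtree_component c w : p c = Some w ->
  is_component e (subtree p w :\ w) (subtree p c).
Proof. by move=> pc; have [] := search_subtree_child esym (sub_p w) pc. Qed.

Lemma subtree_eq (S : {set T}) w : w \in S ->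
  (forall a b, p a = Some b -> b \in S -> a \in S) ->
  (forall a, a \in S -> a != w -> exists2 b, p a = Some b & b \in S) ->
  subtree p w = S.
Proof.
move=> wS clS parS; have [r [pr stT]] := sp.
apply/eqP; rewrite eqEsubset subtree_sub //=.
by apply: sub_subtree pr _ wS parS => y; apply: (st_desc esym stT (in_setT y)).1.
Qed.

End SearchTreeFacts.

Section Rotation.
Variables (T : finType) (e : rel T).
Hypotheses (esym : symmetric e) (gc : graph_connected e).
Variables (p : {ffun T -> option T}) (u v : T).
Hypotheses (sp : is_search_tree e p) (pvu : p v = Some u).
Local Notation q := (rotate e p u v).
Hypothesis sq : is_search_tree e q.

Variant rotate_spec (a : T) : option T -> Prop :=
  | RotateV of a = v : rotate_spec a (p u)
  | RotateU of a = u : rotate_spec a (Some v)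
  | RotateChild b of p a = Some v & a != u & b \in [:: u; v] : rotate_spec a (Some b)
  | RotateOther of a != v & a != u & p a != Some v : rotate_spec a (p a).

Lemma rotateP a : rotate_spec a (q a).
Proof.
rewrite ffunE; have [->|av] := eqVneq a v; first exact: RotateV.
have [->|au] := eqVneq a u; first exact: RotateU.
have [pav|pav] := eqVneq (p a) (Some v); last exact: RotateOther.
by case: ifP => _; apply: RotateChild; rewrite ?inE ?eqxx ?orbT.
Qed.

Lemma rotate_neq : u != v.
Proof. by rewrite eq_sym (parent_neq esym gc sp pvu). Qed.

Lemma rotate_u : q u = Some v.
Proof. by rewrite ffunE (negPf rotate_neq) eqxx. Qed.

Lemma mem_v_subtree_u : v \in subtree p u.
Proof. exact: subtree_child pvu (mem_subtree_self p u). Qed.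

Lemma subtree_rotate_v : subtree q v = subtree p u.
Proof.
apply: (subtree_eq esym sq mem_v_subtree_u) => a.
  move=> b; case: rotateP => [->|->|b' pav _ _|_ _ _ pab] //.
  - by move=> _ _; apply: mem_v_subtree_u.
  - by move=> _ _; apply: mem_subtree_self.
  - by move=> _ _; apply: subtree_child pav mem_v_subtree_u.
  - exact: subtree_child pab.
case: rotateP => [->|->|b pav _ buv|_ au _] au' av; first by rewrite eqxx in av.
- by exists v => //; apply: mem_v_subtree_u.
- exists b => //; move: buv; rewrite mem_seq2 => /orP [] /eqP ->.
    exact: mem_subtree_self.
  exact: mem_v_subtree_u.
- exact: subtree_parent.
Qed.

Lemma subtree_rotate_other w : w != u -> w != v -> subtree q w = subtree p w.
Proof.
rewrite ![w == _]eq_sym => uw vw; set S := subtree p w.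
have vSu : v \in S -> u \in S.
  move=> vS; have [b] := subtree_parent vS vw.
  by rewrite pvu => -[<-].
have parS a b : p a = Some b -> a \in S -> a != w -> b \in S.
  by move=> pab aS aw; have [b'] := subtree_parent aS aw; rewrite pab => -[->].
apply: (subtree_eq esym sq (mem_subtree_self p w)) => a.
  move=> b; case: rotateP => [->|->|b' pav _ buv|_ _ _ pab].
  - by move=> pub bS; apply: subtree_child pvu (subtree_child pub bS).
  - by move=> [<-]; apply: vSu.
  - move=> [<-] b'S; apply: subtree_child pav _.
    by move: buv b'S; rewrite mem_seq2 => /orP [] /eqP -> // /(subtree_child pvu).
  - exact: subtree_child pab.
case: rotateP => [->|->|b pav au buv|_ _ _] aS aw.
- have [b pub bS] := subtree_parent (vSu aS) uw.
  by exists b.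
- by exists v => //; apply: subtree_child pvu aS.
- have vS := parS _ _ pav aS aw; exists b => //.
  by move: buv; rewrite mem_seq2 => /orP [] /eqP -> //; apply: vSu.
- exact: subtree_parent.
Qed.

End Rotation.

Lemma sum_split_pair (T : finType) (F : T -> nat) u v : u != v ->
  \sum_w F w = F u + F v + \sum_(w | (w != u) && (w != v)) F w.
Proof.
move=> uv; rewrite (bigD1 u) //= (bigD1 v) 1?eq_sym //= addnA.
by congr (_ + _); apply: eq_bigl => w; rewrite andbC.
Qed.

Section ThresholdOrder.
Variables (T : finType) (e : rel T).
Hypotheses (esym : symmetric e) (eirr : irreflexive e).
Variable s : seq T.
Hypotheses (s_all : forall x, x \in s)
  (s_thr : forall s1 x s2, s = s1 ++ x :: s2 ->
     (forall y, y \in s1 -> e x y) \/ (forall y, y \in s1 -> ~~ e x y)).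
Implicit Types (x y z t w : T) (A B C X : {set T}).

Definition dominating x := all (e x) (take (index x s) s).

Definition key x :=
  if dominating x then size s + index x s else size s - index x s.

Lemma index_lt_size x : index x s < size s.
Proof. by rewrite index_mem. Qed.

Lemma index_seq_inj x y : index x s = index y s -> x = y.
Proof. by move=> ixy; rewrite -(nth_index x (s_all x)) ixy nth_index. Qed.

Lemma edge_dominating x y : index x s < index y s -> e x y = dominating y.
Proof.
move=> ltxy; have xs : x \in take (index y s) s by rewrite in_take.
have sE : s = take (index y s) s ++ y :: drop (index y s).+1 s.
  by rewrite -{1}(cat_take_drop (index y s) s) (drop_nth y (index_lt_size y)) nth_index.
rewrite esym /dominating; case: (s_thr sE) => yxs.
  by rewrite (yxs x xs); symmetry; apply/allP.
by rewrite (negPf (yxs x xs)); symmetry; apply/allPn; exists x; rewrite ?yxs.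
Qed.

Lemma index_gt0 x : ~~ dominating x -> 0 < index x s.
Proof. by rewrite lt0n; apply: contra => /eqP; rewrite /dominating => ->; rewrite take0. Qed.

Lemma key_inj : injective key.
Proof.
move=> x y; have := index_lt_size x; have := index_lt_size y.
rewrite /key; case dx: (dominating x); case dy: (dominating y) => ltx lty kxy;
  apply: index_seq_inj; move: kxy.
- lia.
- by have := index_gt0 (negbT dy); lia.
- by have := index_gt0 (negbT dx); lia.
- lia.
Qed.

Lemma index_ltgt x y : x != y -> index x s < index y s \/ index y s < index x s.
Proof.
move=> xy; case: ltngtP => [||/index_seq_inj xyE]; [by left|by right|].
by rewrite xyE eqxx in xy.
Qed.

Lemma key_nested x y z : key x < key y -> e x z -> z != y -> e y z.
Proof.
move=> kxy exz zy; have zx : z != x by apply: contraTneq exz => ->; rewrite eirr.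
have := index_lt_size x; have := index_lt_size y; have := index_lt_size z.
case: (index_ltgt zy) => [ltzy|ltyz] ltz lty ltx.
  rewrite esym (edge_dominating ltzy); apply: contraTT exz => ndy.
  have ndx : ~~ dominating x.
    by apply: contraTN kxy => dx; rewrite /key dx (negPf ndy) -leqNgt; lia.
  have ltyx : index y s < index x s.
    by move: kxy; rewrite /key (negPf ndx) (negPf ndy); lia.
  by rewrite esym (edge_dominating (ltn_trans ltzy ltyx)).
rewrite (edge_dominating ltyz); case: (index_ltgt zx) => [ltzx|]; last first.
  by move/edge_dominating <-.
have dx : dominating x by rewrite -(edge_dominating ltzx) esym.
by move: kxy; rewrite /key dx; case: (dominating y); lia.
Qed.

Lemma key_max_dominates X z y : connected_in e X -> z \in X ->
  (forall w, w \in X -> key w <= key z) -> y \in X -> y != z -> e z y.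
Proof.
move=> cX zX zmax yX yz; have [t tX eyt] := connected_in_neighbour cX yX zX yz.
rewrite esym in eyt; have [<-|tz] := eqVneq t z; first by [].
have ltkey : key t < key z by rewrite ltn_neqAle (inj_eq key_inj) tz zmax.
exact: key_nested ltkey eyt yz.
Qed.

Definition nabove A w := #|[set y in A | key w < key y]|.

Lemma eq_nabove A B w : (forall y, key w < key y -> (y \in A) = (y \in B)) ->
  nabove A w = nabove B w.
Proof.
move=> AB; apply: eq_card => y; rewrite !inE.
by case: ltnP => [/AB ->|]; rewrite ?andbF.
Qed.

Lemma nabove_setU1 A a w : a \notin A -> key w < key a ->
  nabove (a |: A) w = (nabove A w).+1.
Proof.
move=> aA kwa; rewrite /nabove (_ : [set y in a |: A | _] = a |: [set y in A | key w < key y]).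
  by rewrite cardsU1 inE (negPf aA).
by apply/setP=> y; rewrite !inE; case: eqP => // ->.
Qed.

Lemma nabove_gt0 A w y : y \in A -> key w < key y -> 0 < nabove A w.
Proof. by move=> yA kwy; rewrite card_gt0; apply/set0Pn; exists y; rewrite inE yA. Qed.

Definition count_jump (m n : nat) : Prop := n = m.+1 \/ m = 0 /\ 0 < n.

Lemma nabove_component_above X C u v : connected_in e X ->
  is_component e (X :\ v) C -> u \in C -> key v < key u ->
  nabove C u = nabove X u.
Proof.
move=> cX compC uC kvu; have [_ /subsetP CX _ clC] := compC.
have /setD1P [_ uX] := CX u uC.
apply: eq_nabove => y kuy; apply/idP/idP => [/CX /setD1P [] //|yX].
have [z zX zmax] := @arg_maxnP T u (fun y => y \in X) key uX.
have kyz := zmax y yX.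
have zdom := key_max_dominates cX zX zmax.
have zC : z \in C.
  apply: clC uC _ _; first by rewrite !inE zX andbT; apply: contraTneq kyz => ->; lia.
  by rewrite esym zdom //; apply: contraTneq kyz => <-; rewrite -ltnNge.
have [->//|yz] := eqVneq y z; apply: clC zC _ (zdom y yX yz).
by rewrite !inE yX andbT; apply: contraTneq kuy => ->; rewrite -leqNgt ltnW.
Qed.

Lemma nabove_component_jump X C u v : is_component e (X :\ u) C ->
  v \in C -> u \in X -> key v < key u -> count_jump (nabove C v) (nabove X v).
Proof.
move=> compC vC uX kvu; have [_ /subsetP CX cC clC] := compC.
case: (posnP (nabove C v)) => [C0|]; first by right; split; last exact: nabove_gt0 uX kvu.
rewrite card_gt0 => /set0Pn [y0]; rewrite inE => /andP [y0C kvy0]; left.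
have vy0 : v != y0 by apply: contraTneq kvy0 => <-; rewrite ltnn.
have [t tC evt] := connected_in_neighbour cC vC y0C vy0.
have uC : u \notin C by apply: contraTN isT => /CX; rewrite !inE eqxx.
rewrite -(nabove_setU1 uC kvu); apply: eq_nabove => y kvy; rewrite in_setU1.
have [-> //|yu /=] := eqVneq y u.
apply/idP/idP => [yX|/CX /setD1P [] //]; apply/negPn/negP => yC.
have ty : t != y by apply: contraNneq yC => <-.
have/negP := yC; apply; apply: clC tC _ _; first by rewrite !inE yu.
by rewrite esym (key_nested kvy evt ty).
Qed.

Lemma nabove_adjacent_components X Cu Cv u v : connected_in e X ->
  is_component e (X :\ u) Cv -> v \in Cv -> is_component e (X :\ v) Cu -> u \in Cu ->
  (nabove Cu u = nabove X u /\ count_jump (nabove Cv v) (nabove X v)) \/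
  (nabove Cv v = nabove X v /\ count_jump (nabove Cu u) (nabove X u)).
Proof.
move=> cX compV vCv compU uCu.
have [_ /subsetP CvX _ _] := compV; have [_ /subsetP CuX _ _] := compU.
have /setD1P [vu vX] := CvX v vCv; have /setD1P [_ uX] := CuX u uCu.
case: (ltngtP (key u) (key v)) => [kuv|kvu|/key_inj uv]; last by rewrite uv eqxx in vu.
  by right; split; [apply: nabove_component_above kuv | apply: nabove_component_jump kuv].
by left; split; [apply: nabove_component_above kvu | apply: nabove_component_jump kvu].
Qed.

Definition count_colour (k : nat) : nat :=
  if k == 0 then 0 else if odd k then 1 else 2.

Lemma count_colour_lt3 k : count_colour k < 3.
Proof. by rewrite /count_colour; case: (k == 0); case: (odd k). Qed.

Lemma count_colour_jump m n : count_jump m n -> count_colour m != count_colour n.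
Proof.
rewrite /count_colour => -[->|[-> n_gt0]] /=; last by rewrite eqn0Ngt n_gt0; case: odd.
by case: m => //= m; case: odd.
Qed.

Definition tree_weight (p : {ffun T -> option T}) : nat :=
  \sum_w count_colour (nabove (subtree p w) w).

Definition tree_colour (p : {ffun T -> option T}) : 'I_3 :=
  Ordinal (ltn_pmod (tree_weight p) (isT : 0 < 3)).

Hypothesis gc : graph_connected e.

Lemma tree_colour_rotate p u v : is_search_tree e p -> p v = Some u ->
  is_search_tree e (rotate e p u v) -> tree_colour p != tree_colour (rotate e p u v).
Proof.
move=> sp pvu sq; set q := rotate e p u v.
have uv := rotate_neq esym gc sp pvu.
have Xq : subtree q v = subtree p u := subtree_rotate_v esym pvu sq.
have compV := child_subtree_component esym gc sp pvu.
have compU : is_component e (subtree p u :\ v) (subtree q u).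
  by rewrite -Xq; exact: (child_subtree_component esym gc sq (rotate_u esym gc sp pvu)).
have := nabove_adjacent_components (subtree_connected esym gc sp (w := u)) compV
  (mem_subtree_self p v) compU (mem_subtree_self q u).
rewrite -[in nabove (subtree p u) v]Xq => counts.
have rest : \sum_(w | (w != u) && (w != v)) count_colour (nabove (subtree q w) w) =
            \sum_(w | (w != u) && (w != v)) count_colour (nabove (subtree p w) w).
  by apply: eq_bigr => w /andP [wu wv]; rewrite (subtree_rotate_other esym pvu sq wu wv).
apply/eqP => /(congr1 val) /=; rewrite /tree_weight !(sum_split_pair _ uv) rest.
have := count_colour_lt3 (nabove (subtree p u) u).
have := count_colour_lt3 (nabove (subtree p v) v).
have := count_colour_lt3 (nabove (subtree q u) u).
have := count_colour_lt3 (nabove (subtree q v) v).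
by case: counts => -[-> /count_colour_jump /eqP]; lia.
Qed.

End ThresholdOrder.

Lemma colorable_cycle5 (V : Type) (vert : V -> Prop) (adj : V -> V -> Prop)
    (x0 x1 x2 x3 x4 : V) (k : nat) :
  vert x0 -> vert x1 -> vert x2 -> vert x3 -> vert x4 ->
  adj x0 x1 -> adj x1 x2 -> adj x2 x3 -> adj x3 x4 -> adj x4 x0 ->
  colorable vert adj k -> 3 <= k.
Proof.
move=> v0 v1 v2 v3 v4 a01 a12 a23 a34 a40 [f f_ok].
have := f_ok _ _ v0 v1 a01; have := f_ok _ _ v1 v2 a12; have := f_ok _ _ v2 v3 a23.
have := f_ok _ _ v3 v4 a34; have := f_ok _ _ v4 v0 a40.
rewrite -!(inj_eq val_inj) /=.
have := ltn_ord (f x0); have := ltn_ord (f x1); have := ltn_ord (f x2).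
have := ltn_ord (f x3); have := ltn_ord (f x4); lia.
Qed.

Lemma rot_adj_rotate (T : finType) (e : rel T) (p q : {ffun T -> option T}) u v x :
  p v = Some u -> rotate e p u v = q -> p x != q x -> rot_adj e p q /\ rot_adj e q p.
Proof.
move=> pvu pq pqx; have neq_pq : p != q by apply: contraNneq pqx => ->.
have rot_pq : is_rotation e p q by exists u, v.
by split; split; [| left | rewrite eq_sym | right].
Qed.

Definition parent_rel (T : eqType) (p : T -> option T) : rel T :=
  fun y z => p z == Some y.

Definition chain_parent (T : eqType) (L : seq T) (y : T) : option T :=
  if index y L is k.+1 then Some (nth y L k) else None.

Lemma chain_parent_head (T : eqType) (x : T) L : chain_parent (x :: L) x = None.
Proof. by rewrite /chain_parent /= eqxx. Qed.

Lemma chain_parent_mem (T : eqType) (L : seq T) y t :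
  chain_parent L y = Some t -> t \in L.
Proof.
rewrite /chain_parent; have := index_size y L.
by case: index => // k ltkL [<-]; apply: mem_nth.
Qed.

Lemma chain_parent_path (T : eqType) (x : T) L :
  uniq (x :: L) -> path (parent_rel (chain_parent (x :: L))) x L.
Proof.
move=> uxL; apply/(pathP x) => i ltiL; rewrite /parent_rel /chain_parent.
rewrite -[nth x L i]/(nth x (x :: L) i.+1) index_uniq //=.
by rewrite (set_nth_default x) //; apply: ltnW.
Qed.

Section FiveCycle.
Variables (T : finType) (e : rel T).
Hypotheses (esym : symmetric e) (eirr : irreflexive e).
Variables a b c : T.
Hypotheses (ac : a != c) (nac : ~~ e a c) (b_univ : forall y, y != b -> e b y).

Lemma neq_ab : a != b.
Proof. by apply: contraNneq nac => abE; rewrite abE b_univ // -abE eq_sym. Qed.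

Lemma neq_cb : c != b.
Proof. by apply: contraNneq nac => cbE; rewrite esym cbE b_univ // -cbE. Qed.

Definition others : seq T := [seq x <- enum T | x \notin [:: a; b; c]].

Lemma mem_others x : (x \in others) = (x \notin [:: a; b; c]).
Proof. by rewrite mem_filter mem_enum andbT. Qed.

Lemma uniq_others : uniq others.
Proof. by rewrite filter_uniq ?enum_uniq. Qed.

(* The parent of the first of a, b, c below the path [others]; it is [None],
   i.e. that vertex is the root, when [others] is empty. *)
Definition tip : option T := last None [seq Some x | x <- others].

Lemma tip_neq t : t \notin others -> (tip == Some t) = false.
Proof.
rewrite /tip; case: others => //= x O; rewrite last_map.
by apply: contraNF => /eqP [<-]; apply: mem_last.
Qed.

Definition tree3 (pa pb pc : option T) : {ffun T -> option T} :=
  [ffun y => if y == a then pa else if y == b then pb else if y == c then pc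
             else chain_parent others y].

Let neq_ba : b != a. Proof. by rewrite eq_sym neq_ab. Qed.
Let neq_bc : b != c. Proof. by rewrite eq_sym neq_cb. Qed.
Let neq_ca : c != a. Proof. by rewrite eq_sym. Qed.
Let neqE := (negPf neq_ab, negPf neq_ba, negPf neq_cb, negPf neq_bc,
             negPf ac, negPf neq_ca).

Lemma tree3_a pa pb pc : tree3 pa pb pc a = pa.
Proof. by rewrite ffunE eqxx. Qed.

Lemma tree3_b pa pb pc : tree3 pa pb pc b = pb.
Proof. by rewrite ffunE neqE eqxx. Qed.

Lemma tree3_c pa pb pc : tree3 pa pb pc c = pc.
Proof. by rewrite ffunE !neqE eqxx. Qed.

Let tree3E := (tree3_a, tree3_b, tree3_c).

Lemma tree3_others pa pb pc : {in others, tree3 pa pb pc =1 chain_parent others}.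
Proof.
move=> y; rewrite mem_others !inE !negb_or ffunE.
by case/and3P=> /negPf -> /negPf -> /negPf ->.
Qed.

Lemma eq_tree3 (q : {ffun T -> option T}) pa pb pc :
  q a = pa -> q b = pb -> q c = pc -> {in others, q =1 chain_parent others} ->
  q = tree3 pa pb pc.
Proof.
move=> qa qb qc qo; apply/ffunP=> y; rewrite ffunE.
have [->|ya] := eqVneq y a => //; have [->|yb] := eqVneq y b => //.
have [->|yc] := eqVneq y c => //; apply: qo.
by rewrite mem_others !inE !negb_or ya yb yc.
Qed.

Lemma rotate_tree3_others pa pb pc u v : u \notin others -> v \notin others ->
  {in others, rotate e (tree3 pa pb pc) u v =1 chain_parent others}.
Proof.
move=> uO vO y yO; have yv : y != v by apply: contraTneq yO => ->.
have yu : y != u by apply: contraTneq yO => ->.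
rewrite /rotate ffunE (negPf yv) (negPf yu) (tree3_others _ _ _ yO).
by have [/chain_parent_mem|] := eqVneq (chain_parent others y) (Some v); rewrite ?(negPf vO).
Qed.

Lemma st_broom (p : {ffun T -> option T}) x L (Z : {set T}) :
  uniq (x :: L) -> {in Z, forall z, z \notin x :: L} -> last x L = b ->
  path (parent_rel p) x L -> {in Z, forall z, p z = Some b} ->
  {in Z &, forall z z', ~~ e z z'} -> st e p ([set y in x :: L] :|: Z) x.
Proof.
move=> + + + + pZ indepZ; elim: L x => [|y L IH] x /= uxL Zout lastx pth.
  rewrite {}lastx in Zout *; apply: StNode; first by rewrite !inE eqxx.
  have -> : ([set y in [:: b]] :|: Z) :\ b = Z.
    apply/setP=> z; rewrite !inE; case: eqVneq => [->|] //=.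
    by symmetry; apply/negbTE/negP => /Zout; rewrite inE eqxx.
  move=> C [/set0Pn [z zC] /subsetP CZ cC _]; exists z; split=> //; first exact: pZ (CZ z zC).
  apply: StNode => // C' [/set0Pn [t tC'] /subsetP C'C _ _].
  have /setD1P [tz tC] := C'C t tC'.
  have zt : z != t by rewrite eq_sym.
  have [t' t'C zt'] := connected_in_neighbour cC zC tC zt.
  by have := indepZ z t' (CZ z zC) (CZ t' t'C); rewrite zt'.
case/andP: uxL => xyL uyL; case/andP: pth => /eqP pyx pth.
apply: StNode; first by rewrite !inE eqxx.
have -> : ([set y' in x :: y :: L] :|: Z) :\ x = [set y' in y :: L] :|: Z.
  apply/setP=> z; rewrite !inE; case: eqVneq => [->|] //=.
  have xZ : x \notin Z by apply/negP => /Zout; rewrite inE eqxx.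
  by move: xyL; rewrite inE negb_or (negPf xZ) => /andP [/negPf -> /negPf ->].
have cS : connected_in e ([set y' in y :: L] :|: Z).
  apply: (connected_in_dominating esym (w := b)) => [|z _]; last exact: b_univ.
  by rewrite -lastx in_setU in_set mem_last.
move=> C /(component_full cS) ->; exists y; split; first by rewrite !inE eqxx.
  exact: pyx.
apply: IH => // z zZ; apply: contra (Zout z zZ) => zyL.
by rewrite in_cons zyL orbT.
Qed.

Lemma others_path (p : {ffun T -> option T}) r R :
  {in others, p =1 chain_parent others} -> p r = tip ->
  path (parent_rel p) r R ->
  exists x L, [/\ others ++ r :: R = x :: L, p x = None & path (parent_rel p) x L].
Proof.
rewrite /tip => p_others pr pth; have uO := uniq_others.
case: others p_others pr uO => [|x O] p_others /=; first by exists r, R.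
rewrite last_map => pr uxO.
exists x, (O ++ r :: R); split=> //; first by rewrite p_others ?chain_parent_head ?mem_head.
rewrite cat_path /= pth andbT [parent_rel p _ r]/parent_rel pr eqxx andbT.
rewrite (@eq_in_path _ (mem (x :: O)) _ (parent_rel (chain_parent (x :: O)))).
- exact: chain_parent_path.
- by move=> y z _ zO; rewrite /parent_rel p_others.
by apply/allP.
Qed.

Lemma broom_search_tree (p : {ffun T -> option T}) r R (Z : seq T) :
  {in others, p =1 chain_parent others} -> perm_eq ((r :: R) ++ Z) [:: a; b; c] ->
  last r R = b -> p r = tip -> path (parent_rel p) r R ->
  {in Z, forall z, p z = Some b} -> is_search_tree e p.
Proof.
move=> p_others permRZ lastR pr pth pZ.
have memRZ := perm_mem permRZ.
have uRZ : uniq ((r :: R) ++ Z) by rewrite (perm_uniq permRZ) /= !inE !neqE.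
rewrite cat_uniq in uRZ; case/and3P: uRZ => uR /hasPn ZnR _.
have notO y : y \in (r :: R) ++ Z -> y \notin others by rewrite memRZ mem_others negbK.
have Zac z : z \in Z -> (z == a) || (z == c).
  move=> zZ; have zb : z != b by apply: contraNneq (ZnR z zZ) => ->; rewrite -lastR mem_last.
  by have := memRZ z; rewrite mem_cat zZ orbT !inE (negPf zb) => <-.
have [x [L [OxL px pxL]]] := others_path p_others pr pth.
exists x; split=> //.
have -> : [set: T] = [set y in x :: L] :|: [set z in Z].
  apply/setP=> y; rewrite in_setT in_setU !in_set -OxL mem_cat.
  case yO: (y \in others) => //=; rewrite -mem_cat memRZ.
  by move: yO; rewrite mem_others => /negbFE.
apply: st_broom => //.
- rewrite -OxL cat_uniq uniq_others uR andbT; apply/hasPn => y yR.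
  by apply: notO; rewrite mem_cat yR.
- move=> z; rewrite in_set -OxL mem_cat negb_or => zZ.
  by rewrite ZnR // andbT notO // mem_cat zZ orbT.
- by have := congr1 (last x) OxL; rewrite last_cat /= lastR.
- by move=> z; rewrite in_set; apply: pZ.
move=> z z'; rewrite !in_set => /Zac zac /Zac z'ac.
by case/orP: zac => /eqP ->; case/orP: z'ac => /eqP ->; rewrite ?eirr // esym.
Qed.

(* [tree_xyz] continues the path [others] with x, y, z; in [tree_bac] both
   a and c are children of b. *)
Definition tree_bac := tree3 (Some b) tip (Some b).
Definition tree_abc := tree3 tip (Some a) (Some b).
Definition tree_acb := tree3 tip (Some c) (Some a).
Definition tree_cab := tree3 (Some c) (Some a) tip.
Definition tree_cba := tree3 (Some b) (Some c) tip.

Lemma tree_bac_search : is_search_tree e tree_bac.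
Proof.
apply: (@broom_search_tree _ b [::] [:: a; c]); rewrite ?tree3E //.
- exact: tree3_others.
- exact: permEl (perm_catCA [:: b] [:: a] [:: c]).
by move=> z; rewrite !inE => /orP [] /eqP ->; rewrite tree3E.
Qed.

Lemma tree_abc_search : is_search_tree e tree_abc.
Proof.
apply: (@broom_search_tree _ a [:: b] [:: c]); rewrite /= /parent_rel ?tree3E ?eqxx //.
- exact: tree3_others.
by move=> z; rewrite !inE => /eqP ->; rewrite tree3E.
Qed.

Lemma tree_acb_search : is_search_tree e tree_acb.
Proof.
apply: (@broom_search_tree _ a [:: c; b] [::]); rewrite /= /parent_rel ?tree3E ?eqxx //.
- exact: tree3_others.
by rewrite perm_cons (perm_catC [:: c] [:: b]).
Qed.

Lemma tree_cab_search : is_search_tree e tree_cab.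
Proof.
apply: (@broom_search_tree _ c [:: a; b] [::]); rewrite /= /parent_rel ?tree3E ?eqxx //.
- exact: tree3_others.
exact: permEl (perm_rot 2 [:: a; b; c]).
Qed.

Lemma tree_cba_search : is_search_tree e tree_cba.
Proof.
apply: (@broom_search_tree _ c [:: b] [:: a]); rewrite /= /parent_rel ?tree3E ?eqxx //.
- exact: tree3_others.
- exact: permEl (perm_rev [:: a; b; c]).
by move=> z; rewrite !inE => /eqP ->; rewrite tree3E.
Qed.

Let aO : a \notin others. Proof. by rewrite mem_others !inE eqxx. Qed.
Let bO : b \notin others. Proof. by rewrite mem_others !inE eqxx orbT. Qed.
Let cO : c \notin others. Proof. by rewrite mem_others !inE eqxx !orbT. Qed.
Let tipE := (tip_neq aO, tip_neq bO, tip_neq cO).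
Let eq_Some (x y : T) : (Some x == Some y) = (x == y). Proof. by []. Qed.

Lemma rotate_bac_abc : rotate e tree_bac b a = tree_abc.
Proof.
apply: eq_tree3; try exact: rotate_tree3_others.
all: by rewrite /rotate ffunE ?neqE ?eqxx ?tree3E ?eq_Some ?neqE ?tipE.
Qed.

Lemma rotate_abc_acb : rotate e tree_abc b c = tree_acb.
Proof.
apply: eq_tree3; try exact: rotate_tree3_others.
all: by rewrite /rotate ffunE ?neqE ?eqxx ?tree3E ?eq_Some ?neqE ?tipE.
Qed.

Lemma rotate_cab_acb : rotate e tree_cab c a = tree_acb.
Proof.
have moved_b : [exists y, desc tree_cab b y && e c y].
  by apply/existsP; exists b; rewrite desc_refl esym b_univ ?neq_cb.
apply: eq_tree3; try exact: rotate_tree3_others.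
all: by rewrite /rotate ffunE ?neqE ?eqxx ?tree3E ?eq_Some ?neqE ?tipE ?moved_b ?eqxx.
Qed.

Lemma rotate_cab_cba : rotate e tree_cab a b = tree_cba.
Proof.
apply: eq_tree3; try exact: rotate_tree3_others.
all: by rewrite /rotate ffunE ?neqE ?eqxx ?tree3E ?eq_Some ?neqE ?tipE.
Qed.

Lemma rotate_bac_cba : rotate e tree_bac b c = tree_cba.
Proof.
apply: eq_tree3; try exact: rotate_tree3_others.
all: by rewrite /rotate ffunE ?neqE ?eqxx ?tree3E ?eq_Some ?neqE ?tipE.
Qed.

Lemma rotation_graph_colorable_ge3 k :
  colorable (is_search_tree e) (rot_adj e) k -> 3 <= k.
Proof.
have bac_abc : rot_adj e tree_bac tree_abc.
  have neq_b : tree_bac b != tree_abc b by rewrite !tree3E tipE.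
  exact: (rot_adj_rotate (tree3_a _ _ _) rotate_bac_abc neq_b).1.
have abc_acb : rot_adj e tree_abc tree_acb.
  have neq_b : tree_abc b != tree_acb b by rewrite !tree3E eq_Some.
  exact: (rot_adj_rotate (tree3_c _ _ _) rotate_abc_acb neq_b).1.
have acb_cab : rot_adj e tree_acb tree_cab.
  have neq_a : tree_cab a != tree_acb a by rewrite !tree3E eq_sym tipE.
  exact: (rot_adj_rotate (tree3_a _ _ _) rotate_cab_acb neq_a).2.
have cab_cba : rot_adj e tree_cab tree_cba.
  have neq_a : tree_cab a != tree_cba a by rewrite !tree3E eq_Some neqE.
  exact: (rot_adj_rotate (tree3_b _ _ _) rotate_cab_cba neq_a).1.
have cba_bac : rot_adj e tree_cba tree_bac.
  have neq_c : tree_bac c != tree_cba c by rewrite !tree3E eq_sym tipE.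
  exact: (rot_adj_rotate (tree3_c _ _ _) rotate_bac_cba neq_c).2.
exact: (colorable_cycle5 tree_bac_search tree_abc_search tree_acb_search
  tree_cab_search tree_cba_search bac_abc abc_acb acb_cab cab_cba cba_bac).
Qed.

End FiveCycle.

Unset Implicit Arguments.

Theorem corollary3p5 (T : finType) (e : rel T) :
  symmetric e -> irreflexive e ->
  graph_connected e -> threshold_graph e -> ~ complete_graph e ->
  rotation_graph_chi_is e 3.
Proof.
move=> esym eirr gc [s [_ s_all s_thr]] not_complete; split.
  exists (tree_colour e s) => p q sp sq [_ [[u [v [pvu qE]]]|[u [v [qvu pE]]]]].
    by rewrite qE; apply: tree_colour_rotate; rewrite -?qE.
  by rewrite pE eq_sym; apply: tree_colour_rotate; rewrite -?pE.
have : ~~ [forall x, forall y, (x != y) ==> e x y].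
  apply/negP => /forallP complete; apply: not_complete => x y.
  by move/forallP/(_ y)/implyP: (complete x).
rewrite negb_forall => /existsP [a]; rewrite negb_forall => /existsP [c].
rewrite negb_imply => /andP [ac nac].
have [b _ bmax] := @arg_maxnP T a predT (key e s) isT.
have b_univ y : y != b -> e b y.
  exact: (key_max_dominates esym eirr s_all s_thr (connected_in_setT gc) (in_setT b)
    (fun w _ => bmax w isT) (in_setT y)).
by move=> k; apply: (rotation_graph_colorable_ge3 esym eirr ac nac b_univ).
Qed.
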